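(* Fix $\theta,\delta>0$. For $\sigma^2,m>0$ let $X,Y$ be independent mean-zero Gaussian random variables with $\mathbb{E}X^2=\sigma^2$ and $\mathbb{E}Y^2=m\sigma^2$. Then there is a function $\varepsilon(m)$, depending only on $\theta,\delta,m$, with $\varepsilon(m)\to0$ as $m\to\infty$, such that $$\sup_{\delta\le\sigma^2\le1,\ t\le\delta^{-1}}\frac{p[X=t\mid X+Y\ge(m+1)\sigma^2\theta]}{p[N(\sigma^2\theta,\sigma^2)=t]}\le1+\varepsilon(m),$$ where $p[\,\cdot=t]$ denotes the probability density at $t$ (the numerator being the conditional density of $X$ given the event $X+Y\ge(m+1)\sigma^2\theta$) and $N(\sigma^2\theta,\sigma^2)$ is a Gaussian with mean $\sigma^2\theta$ and variance $\sigma^2$. *)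

From HB Require Import structures.
From mathcomp Require Import all_boot all_order all_algebra.
From mathcomp Require Import all_classical all_reals all_analysis.
Set Implicit Arguments. Unset Strict Implicit. Unset Printing Implicit Defensive.
Import Order.TTheory GRing.Theory Num.Theory.
Import numFieldNormedType.Exports.
Local Open Scope classical_set_scope.
Local Open Scope ring_scope.

(* Setting: X ~ N(0, v), Y ~ N(0, m v) independent, i.e. (X,Y) is the pair of
   coordinates on R x R under the product probability
   normal_prob 0 (sqrt v) \x normal_prob 0 (sqrt (m v)).
   (normal_prob / normal_pdf are parametrized by the standard deviation.) *)

Definition joint_law {R : realType} (v m : R) :=
  (normal_prob 0 (Num.sqrt v) \x normal_prob 0 (Num.sqrt (m * v)))%E.

Definition thresh {R : realType} (v m theta : R) : R := (m + 1) * v * theta.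

Definition prob_event {R : realType} (v m theta : R) : R :=
  fine (joint_law v m [set z : R * R | thresh v m theta <= z.1 + z.2]).

(* Conditional density of X at t given the event {X + Y >= c}:
   (joint density of (X,Y) integrated over y with t + y >= c) / P[X+Y >= c]
   = p_X(t) * P[Y >= c - t] / P[X + Y >= c]. *)
Definition cond_density_X {R : realType} (v m theta t : R) : R :=
  normal_pdf 0 (Num.sqrt v) t
  * fine (normal_prob 0 (Num.sqrt (m * v)) `[thresh v m theta - t, +oo[)
  / prob_event v m theta.

(* Write c = (m+1) v theta.  Tilting the density of X by exp (theta x)
   turns it into the N(v theta, v) density, and the Chernoff bound
   P[Y >= b] <= p_Y^max exp (m v theta^2 / 2 - theta b) / theta then shows that
   the numerator p_X(t) P[Y >= c - t] is at most N(v theta, v)(t) times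
   Q = p_Y^max exp (- (m+1) v theta^2 / 2) / theta, uniformly in t.
   Conversely, on the strip c - x <= y <= c - x + L the joint density is
   bounded below, after completing squares, by a Gaussian in x times
   exp (- theta (y - c + x)), which integrates to
   P[X + Y >= c] >= Q exp (- L^2 / (m v)) sqrt (m / (m+2)) (1 - exp (- theta L)).
   Taking L = m^(1/4), the ratio of the two bounds tends to 1 uniformly in
   v >= delta. *)

From HB Require Import structures.
From mathcomp Require Import all_boot all_order all_algebra.
From mathcomp Require Import all_classical all_reals all_analysis.
From mathcomp Require Import measurable_realfun.
From mathcomp.algebra_tactics Require Import ring.
Set Implicit Arguments. Unset Strict Implicit. Unset Printing Implicit Defensive.
Import Order.TTheory GRing.Theory Num.Theory.
Import numFieldNormedType.Exports.
Local Open Scope classical_set_scope.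
Local Open Scope ring_scope.

Section normal_facts.
Context {R : realType}.
Local Notation mu := (@lebesgue_measure R).

Lemma normal_pdf_expR (a s x : R) : s != 0 ->
  normal_pdf a s x = normal_peak s * expR (- (x - a) ^+ 2 / (s ^+ 2 *+ 2)).
Proof. by rewrite /normal_pdf => /negbTE ->. Qed.

Lemma normal_peak_div (s s' : R) : 0 < s -> 0 < s' ->
  normal_peak s / normal_peak s' = s' / s.
Proof.
move=> s0 s'0; have pi2 : 0 < Num.sqrt (pi *+ 2) :> R.
  by rewrite sqrtr_gt0 mulrn_wgt0// pi_gt0.
have peakE r : 0 < r -> normal_peak r = (r * Num.sqrt (pi *+ 2))^-1.
  by move=> r0; rewrite /normal_peak -mulrnAr sqrtrM ?sqr_ge0// sqrtr_sqr gtr0_norm.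
by rewrite !peakE//; field; rewrite !gt_eqF.
Qed.

Lemma measurable_expR_scale (th : R) :
  measurable_fun setT (fun y : R => expR (- th * y)).
Proof. by apply: measurableT_comp => //; exact: measurable_funM. Qed.

Section integral_expR.
Variable th : R.
Hypothesis th0 : 0 < th.

Let F (y : R) : R := - expR (- th * y) / th.

Let expR_scale_continuous : continuous (fun z : R^o => expR (- th * z)).
Proof.
move=> z; apply: continuous_comp; last exact: continuous_expR.
by apply: continuousM => //; apply: (@continuousN _ R^o); exact: cst_continuous.
Qed.

Let F_continuous : continuous F.
Proof.
move=> z; apply: (@continuousM _ R^o (fun y => - expR (- th * y)) (fun=> th^-1)).
  by apply: (@continuousN _ R^o); exact: expR_scale_continuous.
exact: cst_continuous.
Qed.

Let F_derivable y : derivable F y 1.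
Proof. by []. Qed.

Let derive1_F y : F^`()%classic y = expR (- th * y).
Proof.
rewrite /F derive1Mr// derive1N// derive1_comp// derive1E.
have /funeqP -> := @derive_expR R.
rewrite derive1Ml// derive1_id mulr1.
by rewrite mulrN opprK -mulrA divff ?gt_eqF// mulr1.
Qed.

Lemma integral_expR_itv a b : a < b ->
  (\int[mu]_(y in `[a, b]) (expR (- th * y))%:E =
   ((expR (- th * a) - expR (- th * b)) / th)%:E)%E.
Proof.
move=> ab; rewrite (continuous_FTC2 ab (F := F)).
- by rewrite /F -EFinB; congr EFin; rewrite mulrBl !mulNr opprK addrC.
- by apply: continuous_subspaceT => z; exact: expR_scale_continuous.
- split; first by move=> z _; exact: F_derivable.
  + by apply/cvg_at_right_filter; exact: F_continuous.
  + by apply/cvg_at_left_filter; exact: F_continuous.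
- by move=> z _; exact: derive1_F.
Qed.

Lemma integral_expR_itvy a :
  (\int[mu]_(y in `[a, +oo[) (expR (- th * y))%:E = (expR (- th * a) / th)%:E)%E.
Proof.
rewrite (@ge0_continuous_FTC2y _ _ F _ 0).
- by rewrite /F -EFinB sub0r mulNr opprK.
- by move=> x _; exact: expR_ge0.
- by apply: continuous_subspaceT => z; exact: expR_scale_continuous.
- rewrite /F -(mul0r th^-1) -oppr0; apply: cvgM; last exact: cvg_cst.
  apply: cvgN.
  rewrite (_ : (fun x => expR (- th * x)) = (fun z => expR (- z)) \o *%R th);
    last by apply: eq_fun => x; rewrite mulNr.
  apply: (@cvg_comp _ _ _ _ _ _ (pinfty_nbhs R)); last exact: cvgr_expR.
  exact: gt0_cvgMry.
- by move=> x _; exact: F_derivable.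
- by apply/cvg_at_right_filter; exact: F_continuous.
- by move=> x _; exact: derive1_F.
Qed.

End integral_expR.

Lemma ge0_integral_normal_prob (a s : R) (f : R -> \bar R) (U : set R) :
  measurable U -> measurable_fun U f -> (forall x, 0 <= f x)%E ->
  (\int[normal_prob a s]_(x in U) f x =
   \int[mu]_(x in U) (f x * (normal_pdf a s x)%:E))%E.
Proof.
move=> mU mf f0; have nu_mu := normal_prob_dominates a s.
have mpdf : measurable_fun U (fun x => (normal_pdf a s x)%:E).
  by apply/measurable_EFinP/measurable_funTS; exact: measurable_normal_pdf.
have int_dnu := Radon_Nikodym_SigmaFinite.f_integrable nu_mu.
rewrite -(Radon_Nikodym_SigmaFinite.change_of_variables nu_mu f0 mU mf).
apply: ae_eq_integral => //.
- by apply: emeasurable_funM => //; apply: measurable_funTS; exact: measurable_int int_dnu.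
- exact: emeasurable_funM.
- apply: ae_eqe_mul2l; apply: integral_ae_eq => //; first exact: integrableS int_dnu.
  by move=> E _ mE; rewrite -Radon_Nikodym_SigmaFinite.f_integral.
Qed.

Lemma normal_prob_itvy_le (s th b : R) : 0 < s -> 0 < th ->
  (normal_prob 0 s `[b, +oo[ <=
   (normal_peak s * expR (s ^+ 2 * th ^+ 2 / 2 - th * b) / th)%:E)%E.
Proof.
move=> s0 th0; set K := normal_peak s * expR (s ^+ 2 * th ^+ 2 / 2).
have pdf_le y : normal_pdf 0 s y <= K * expR (- th * y).
  rewrite normal_pdf_expR ?gt_eqF// -mulrA ler_wpM2l ?normal_peak_ge0//.
  rewrite -expRD ler_expR subr0.
  have -> : s ^+ 2 * th ^+ 2 / 2 + - th * y =
      - y ^+ 2 / (s ^+ 2 *+ 2) + (y - s ^+ 2 * th) ^+ 2 / (s ^+ 2 *+ 2).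
    by field; rewrite gt_eqF.
  by rewrite lerDl divr_ge0 ?sqr_ge0// mulrn_wge0 ?sqr_ge0.
apply: (@le_trans _ _ (\int[mu]_(y in `[b, +oo[) (K * expR (- th * y))%:E)%E).
  apply: ge0_le_integral => //.
  - by move=> y _; rewrite lee_fin normal_pdf_ge0.
  - by apply/measurable_EFinP/measurable_funTS; exact: measurable_normal_pdf.
  - apply/measurable_EFinP/measurable_funTS/measurable_funM => //.
    exact: measurable_expR_scale.
  - by move=> y _; rewrite lee_fin.
under eq_integral do rewrite EFinM.
rewrite ge0_integralZl//; last 2 first.
- by apply/measurable_EFinP/measurable_funTS; exact: measurable_expR_scale.
- by rewrite lee_fin mulr_ge0 ?normal_peak_ge0 ?expR_ge0.
by rewrite integral_expR_itvy// -EFinM lee_fin /K expRD mulNr !mulrA.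
Qed.

End normal_facts.

Section joint_law.
Context {R : realType}.
Local Notation mu := (@lebesgue_measure R).

Lemma measurable_halfplane (c : R) : measurable [set z : R * R | c <= z.1 + z.2].
Proof.
have -> : [set z : R * R | c <= z.1 + z.2] =
    (fun z : R * R => z.1 + z.2) @^-1` `[c, +oo[.
  by apply/seteqP; split => z /=; rewrite in_itv/= andbT.
by rewrite -[X in measurable X]setTI; apply: measurable_funD.
Qed.

Lemma joint_law_setT (v m : R) : joint_law v m [set: R * R] = 1%E.
Proof.
have setT1 a s : normal_prob a s [set: R] = 1%E := probability_setT _.
by rewrite /joint_law -setXTT product_measure1E//= !setT1 mule1.
Qed.

Lemma joint_law_fin_num (v m : R) (S : set (R * R)) : measurable S ->
  joint_law v m S \is a fin_num.
Proof.
move=> mS; rewrite ge0_fin_numE ?measure_ge0//; apply: le_lt_trans (ltry 1).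
by rewrite -(joint_law_setT v m) le_measure ?inE.
Qed.

Lemma joint_lawE (v m : R) (S : set (R * R)) : measurable S ->
  joint_law v m S = (\int[mu]_x
    (normal_prob 0 (Num.sqrt (m * v)) (xsection S x) *
     (normal_pdf 0 (Num.sqrt v) x)%:E))%E.
Proof.
move=> mS; rewrite /joint_law /product_measure1/= ge0_integral_normal_prob//.
exact: measurable_fun_xsection.
Qed.

End joint_law.

Section conditional_density_bounds.
Context {R : realType}.
Local Notation mu := (@lebesgue_measure R).
Variables (m v th : R).
Hypotheses (m0 : 0 < m) (v0 : 0 < v) (th0 : 0 < th).

Let sX := Num.sqrt v.
Let sY := Num.sqrt (m * v).
Let sZ := Num.sqrt (m * v / (m + 2)).
Let c := thresh v m th.
Let A := normal_peak sY * expR (- ((m + 1) * v * th ^+ 2 / 2)).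
Let r := normal_peak sX / normal_peak sZ.
Let H := [set z : R * R | c <= z.1 + z.2].

Let mv0 : 0 < m * v. Proof. exact: mulr_gt0. Qed.
Let m20 : 0 < m + 2. Proof. exact: addr_gt0. Qed.
Let sX0 : 0 < sX. Proof. by rewrite sqrtr_gt0. Qed.
Let sY0 : 0 < sY. Proof. by rewrite sqrtr_gt0. Qed.
Let sZ0 : 0 < sZ. Proof. by rewrite sqrtr_gt0 divr_gt0. Qed.
Let sX2 : sX ^+ 2 = v. Proof. by rewrite sqr_sqrtr// ltW. Qed.
Let sY2 : sY ^+ 2 = m * v. Proof. by rewrite sqr_sqrtr// ltW. Qed.
Let sZ2 : sZ ^+ 2 = m * v / (m + 2). Proof. by rewrite sqr_sqrtr// ltW// divr_gt0. Qed.
Let A0 : 0 < A. Proof. by rewrite mulr_gt0 ?expR_gt0// normal_peak_gt0// gt_eqF. Qed.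
Let r0 : 0 < r. Proof. by rewrite divr_gt0// normal_peak_gt0// gt_eqF. Qed.

Let expR_lt1 L : 0 < L -> 0 < 1 - expR (- th * L).
Proof. by move=> L0; rewrite subr_gt0 -expR0 ltr_expR mulNr oppr_lt0 mulr_gt0. Qed.

Lemma conditional_numerator_le t :
  normal_pdf 0 sX t * fine (normal_prob 0 sY `[c - t, +oo[) <=
  normal_pdf (v * th) sX t * (A / th).
Proof.
have tail : fine (normal_prob 0 sY `[c - t, +oo[) <=
    normal_peak sY * expR (m * v * th ^+ 2 / 2 - th * (c - t)) / th.
  by rewrite -lee_fin fineK ?fin_num_measure// -sY2 normal_prob_itvy_le.
have tilt : normal_pdf 0 sX t =
    normal_pdf (v * th) sX t * expR (- th * t + v * th ^+ 2 / 2).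
  rewrite !normal_pdf_expR ?gt_eqF// sX2 subr0 -[RHS]mulrA -expRD.
  by congr (_ * expR _); field; rewrite gt_eqF.
rewrite tilt -mulrA ler_wpM2l ?normal_pdf_ge0//.
apply: le_trans (ler_wpM2l (expR_ge0 _) tail) _.
have e : - th * t + v * th ^+ 2 / 2 + (m * v * th ^+ 2 / 2 - th * (c - t)) =
    - ((m + 1) * v * th ^+ 2 / 2) by rewrite /c /thresh; field.
by rewrite [leLHS](_ : _ = A / th)// /A -e [in RHS]expRD; ring.
Qed.

(* Multiplied by [2 m v], the difference of the two sides is
   [2 (L^2 - u^2) + (u + x - v th)^2]. *)
Lemma joint_exponent_ge (L x u : R) : 0 <= u -> u <= L ->
  - ((m + 1) * v * th ^+ 2 / 2) - L ^+ 2 / (m * v)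
    - (x - v * th) ^+ 2 / (m * v / (m + 2) *+ 2) - th * u
  <= - x ^+ 2 / (v *+ 2) - (c - x + u) ^+ 2 / (m * v *+ 2).
Proof.
move=> u0 uL; rewrite -subr_ge0.
have -> : - x ^+ 2 / (v *+ 2) - (c - x + u) ^+ 2 / (m * v *+ 2) -
    (- ((m + 1) * v * th ^+ 2 / 2) - L ^+ 2 / (m * v)
     - (x - v * th) ^+ 2 / (m * v / (m + 2) *+ 2) - th * u) =
    ((L ^+ 2 - u ^+ 2) *+ 2 + (u + x - v * th) ^+ 2) / (m * v *+ 2).
  by rewrite /c /thresh; field; rewrite !gt_eqF.
rewrite divr_ge0 ?mulrn_wge0 ?(ltW mv0)// addr_ge0 ?sqr_ge0//.
by rewrite mulrn_wge0// subr_ge0 ler_sqr ?nnegrE// (le_trans u0).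
Qed.

Lemma joint_pdf_ge (L x u : R) : 0 <= u -> u <= L ->
  A * expR (- (L ^+ 2 / (m * v))) * r * normal_pdf (v * th) sZ x * expR (- (th * u))
  <= normal_pdf 0 sX x * normal_pdf 0 sY (c - x + u).
Proof.
move=> u0 uL; have pZ0 : normal_peak sZ != 0 by rewrite gt_eqF// normal_peak_gt0// gt_eqF.
rewrite !normal_pdf_expR ?gt_eqF// sX2 sY2 sZ2 !subr0 /A /r.
set pX := normal_peak sX; set pY := normal_peak sY; set pZ := normal_peak sZ.
pose E1 := - ((m + 1) * v * th ^+ 2 / 2) - L ^+ 2 / (m * v)
  - (x - v * th) ^+ 2 / (m * v / (m + 2) *+ 2) - th * u.
pose E2 := - x ^+ 2 / (v *+ 2) - (c - x + u) ^+ 2 / (m * v *+ 2).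
rewrite [leLHS](_ : _ = pX * pY * expR E1); last by rewrite /E1 !expRD !mulNr; field.
rewrite [leRHS](_ : _ = pX * pY * expR E2); last by rewrite /E2 expRD !mulNr; ring.
by rewrite ler_wpM2l ?mulr_ge0 ?normal_peak_ge0// ler_expR joint_exponent_ge.
Qed.

Lemma xsection_prob_ge (L x : R) : 0 < L ->
  ((A / th * expR (- (L ^+ 2 / (m * v))) * r * (1 - expR (- th * L))
      * normal_pdf (v * th) sZ x)%:E
   <= normal_prob 0 sY (xsection H x) * (normal_pdf 0 sX x)%:E)%E.
Proof.
move=> L0; set a := c - x.
set K := A * expR (- (L ^+ 2 / (m * v))) * r * normal_pdf (v * th) sZ x.
have K0 : 0 <= K.
  by rewrite /K !mulr_ge0 ?expR_ge0 ?normal_pdf_ge0 ?invr_ge0 ?normal_peak_ge0.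
have sub : `[a, a + L] `<=` xsection H x.
  by move=> y /=; rewrite in_itv/= => /andP[ay _]; rewrite /xsection/= inE /H/= -lerBlDl.
have le_sub : (normal_prob 0 sY `[a, (a + L)%R] <= normal_prob 0 sY (xsection H x))%E.
  by apply: le_measure => //; rewrite inE//; exact: measurable_xsection (measurable_halfplane c).
apply: le_trans (lee_wpmul2r _ le_sub); last by rewrite lee_fin normal_pdf_ge0.
rewrite /normal_prob -ge0_integralZr//; first last.
- by rewrite lee_fin normal_pdf_ge0.
- by move=> y _; rewrite lee_fin normal_pdf_ge0.
- by apply/measurable_EFinP/measurable_funTS; exact: measurable_normal_pdf.
rewrite [leLHS](_ : _ =
    \int[mu]_(y in `[a, (a + L)%R]) (K * expR (th * a) * expR (- th * y))%:E)%E; last first.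
  under eq_integral do rewrite EFinM.
  rewrite ge0_integralZl//; first last.
  - by rewrite lee_fin mulr_ge0 ?expR_ge0.
  - by apply/measurable_EFinP/measurable_funTS; exact: measurable_expR_scale.
  have ea : expR (th * a) = (expR (- th * a))^-1 by rewrite -expRN mulNr opprK.
  rewrite integral_expR_itv ?ltrDl// -EFinM (mulrDr (- th) a L) expRD ea.
  by congr EFin; rewrite /K; field; rewrite !gt_eqF ?expR_gt0.
apply: ge0_le_integral => //.
- by move=> y _; rewrite lee_fin !mulr_ge0 ?expR_ge0 ?normal_peak_ge0 ?invr_ge0 ?normal_pdf_ge0.
- by apply/measurable_EFinP/measurable_funTS/measurable_funM => //; exact: measurable_expR_scale.
- apply: emeasurable_funM => //; apply/measurable_EFinP/measurable_funTS.
  exact: measurable_normal_pdf.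
move=> y; rewrite /= in_itv/= => /andP[ay yaL]; rewrite -EFinM lee_fin.
have u0 : 0 <= y - a by rewrite subr_ge0.
have uL : y - a <= L by rewrite lerBlDl.
have := joint_pdf_ge x u0 uL; rewrite subrKC [leRHS]mulrC => /(le_trans _); apply.
rewrite [leLHS](_ : _ = K * expR (- (th * (y - a))))//.
by rewrite -mulrA -expRD; congr (_ * expR _); ring.
Qed.

Lemma prob_event_ge (L : R) : 0 < L ->
  A / th * expR (- (L ^+ 2 / (m * v))) * r * (1 - expR (- th * L))
  <= prob_event v m th.
Proof.
move=> L0; have mH : measurable H := measurable_halfplane c.
have B0 : 0 <= A / th * expR (- (L ^+ 2 / (m * v))) * r * (1 - expR (- th * L)).
  by rewrite !mulr_ge0 ?expR_ge0 ?invr_ge0 ?normal_peak_ge0 ?(ltW th0) ?(ltW (expR_lt1 L0)).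
rewrite /prob_event -lee_fin fineK ?joint_law_fin_num// joint_lawE//.
rewrite -[leLHS]mule1 -(integral_normal_pdf (v * th) sZ) -ge0_integralZl//; first last.
- by move=> x _; rewrite lee_fin normal_pdf_ge0.
- by apply/measurable_EFinP; exact: measurable_normal_pdf.
apply: ge0_le_integral => //.
- by move=> x _; rewrite -EFinM lee_fin mulr_ge0 ?normal_pdf_ge0.
- by apply/measurable_EFinP/measurable_funM => //; exact: measurable_normal_pdf.
- apply: emeasurable_funM; first exact: measurable_fun_xsection.
  by apply/measurable_EFinP; exact: measurable_normal_pdf.
by move=> x _; rewrite -EFinM; exact: xsection_prob_ge.
Qed.

Lemma cond_density_ratio_le (t L : R) : 0 < L ->
  cond_density_X v m th t / normal_pdf (v * th) sX t <=
  expR (L ^+ 2 / (m * v)) / (r * (1 - expR (- th * L))).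
Proof.
move=> L0; have low := prob_event_ge L0.
set P := prob_event v m th in low *; set B := expR _ / _.
have B0 : 0 <= B by rewrite divr_ge0 ?expR_ge0// mulr_ge0 ?(ltW r0) ?(ltW (expR_lt1 L0)).
have P0 : 0 < P.
  apply: lt_le_trans low.
  exact: mulr_gt0 (mulr_gt0 (mulr_gt0 (divr_gt0 A0 th0) (expR_gt0 _)) r0) (expR_lt1 L0).
set pZ := normal_pdf (v * th) sX t.
have pZ0 : 0 < pZ.
  by rewrite /pZ normal_pdf_expR ?gt_eqF// mulr_gt0 ?expR_gt0// normal_peak_gt0// gt_eqF.
apply: (@le_trans _ _ (pZ * (A / th) / P / pZ)).
  rewrite /cond_density_X -/P; apply: ler_wpM2r; first by rewrite invr_ge0 ltW.
  apply: ler_wpM2r; first by rewrite invr_ge0 ltW.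
  exact: conditional_numerator_le.
rewrite (_ : _ / pZ = A / th / P); last by field; rewrite !gt_eqF.
rewrite ler_pdivrMr//; apply: le_trans (ler_wpM2l B0 low).
rewrite [leRHS](_ : _ = A / th)// /B expRN.
by field; rewrite !gt_eqF ?expR_gt0 ?expR_lt1.
Qed.

End conditional_density_bounds.

Section uniform_bound.
Context {R : realType}.

Lemma normal_peak_ratio_ge (m v : R) : 0 < m -> 0 < v ->
  m / (m + 2) <= normal_peak (Num.sqrt v) / normal_peak (Num.sqrt (m * v / (m + 2))).
Proof.
move=> m0 v0; have m20 : 0 < m + 2 by rewrite addr_gt0.
set q := m / (m + 2); have q0 : 0 <= q by rewrite divr_ge0 ?ltW.
have q1 : q <= 1 by rewrite ler_pdivrMr// mul1r lerDl.
rewrite normal_peak_div ?sqrtr_gt0 ?divr_gt0 ?mulr_gt0// mulrAC -/q sqrtrM//.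
rewrite mulfK ?gt_eqF ?sqrtr_gt0// -{1}(sqr_sqrtr q0) expr2.
by rewrite ler_piMr ?sqrtr_ge0// -sqrtr1 ler_sqrt.
Qed.

Definition ratio_bound (theta delta m : R) : R :=
  expR ((delta * Num.sqrt m)^-1) * (1 + 2 / m)
  / (1 - expR (- (theta * Num.sqrt (Num.sqrt m)))).

(* The choice [L = m^(1/4)] in [cond_density_ratio_le] makes both
   [L^2 / (m v)] and [expR (- theta L)] vanish as [m] grows. *)
Lemma cond_density_ratio_le_bound (theta delta m v t : R) :
  0 < theta -> 0 < delta -> 0 < m -> delta <= v ->
  cond_density_X v m theta t / normal_pdf (v * theta) (Num.sqrt v) t
  <= ratio_bound theta delta m.
Proof.
move=> th0 d0 m0 dv; have v0 : 0 < v by apply: lt_le_trans dv.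
set L := Num.sqrt (Num.sqrt m); have L0 : 0 < L by rewrite !sqrtr_gt0.
have L2 : L ^+ 2 = Num.sqrt m by rewrite sqr_sqrtr// sqrtr_ge0.
have e0 : 0 < 1 - expR (- theta * L).
  by rewrite subr_gt0 -expR0 ltr_expR mulNr oppr_lt0 mulr_gt0.
have r_ge := normal_peak_ratio_ge m0 v0; set r := _ / _ in r_ge.
have r0 : 0 < r by apply: lt_le_trans r_ge; rewrite divr_gt0// addr_gt0.
apply: le_trans (cond_density_ratio_le m0 v0 th0 t L0) _.
rewrite /ratio_bound -/L -/r (invfM r) mulrA mulNr.
apply: ler_wpM2r; first by rewrite invr_ge0 -mulNr (ltW e0).
apply: ler_pM; rewrite ?expR_ge0 ?invr_ge0 ?(ltW r0)//.
- have -> : (delta * Num.sqrt m)^-1 = Num.sqrt m / (m * delta).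
    by rewrite -[X in X * delta](sqr_sqrtr (ltW m0)); field; rewrite !gt_eqF ?sqrtr_gt0.
  by rewrite ler_expR L2 ler_pM2l ?sqrtr_gt0// lef_pV2 ?posrE ?mulr_gt0// ler_pM2l.
- have -> : 1 + 2 / m = (m / (m + 2))^-1 by field; rewrite !gt_eqF ?addr_gt0.
  by rewrite lef_pV2// posrE divr_gt0// addr_gt0.
Qed.

Lemma cvgy_sqrtr : Num.sqrt x @[x --> (+oo : set_system R)] --> +oo.
Proof.
apply/cvgryPge => A; near=> x; apply: le_trans (ler_norm A) _.
rewrite -sqrtr_sqr ler_sqrt; near: x; apply: nbhs_pinfty_ge; exact: num_real.
Unshelve. all: by end_near.
Qed.

Lemma ratio_bound_cvg (theta delta : R) : 0 < theta -> 0 < delta ->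
  ratio_bound theta delta m @[m --> (+oo : set_system R)] --> (1 : R).
Proof.
move=> th0 d0.
have pinfty_gt0 : \forall x \near (+oo : set_system R), 0 < x.
  by near=> x; near: x; exact: nbhs_pinfty_gt.
have exp_cvg : expR ((delta * Num.sqrt x)^-1) @[x --> (+oo : set_system R)] --> (1 : R).
  rewrite -expR0; apply: (cvg_comp (fun x => (delta * Num.sqrt x)^-1) expR
    (G := nbhs (0 : R))); last exact: continuous_expR.
  have pos : \forall x \near (+oo : set_system R), 0 < delta * Num.sqrt x.
    by near=> x; rewrite mulr_gt0// sqrtr_gt0; near: x.
  exact: (proj2 (gtr0_cvgV0 pos) (gt0_cvgMry d0 cvgy_sqrtr)).
have harm_cvg : (1 + 2 / x) @[x --> (+oo : set_system R)] --> (1 : R).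
  rewrite -[X in _ --> X]addr0 -(mulr0 2); apply: cvgD; first exact: cvg_cst.
  by apply: cvgM; [exact: cvg_cst | exact: (proj2 (gtr0_cvgV0 pinfty_gt0) cvg_id)].
have tail_cvg : (1 - expR (- (theta * Num.sqrt (Num.sqrt x))))
    @[x --> (+oo : set_system R)] --> (1 : R).
  rewrite -[X in _ --> X]subr0; apply: cvgB; first exact: cvg_cst.
  have sqrt2_cvgy := cvg_comp _ _ cvgy_sqrtr cvgy_sqrtr.
  exact: (cvg_comp _ _ (gt0_cvgMry th0 sqrt2_cvgy) (@cvgr_expR R)).
have lim := cvgM (cvgM exp_cvg harm_cvg) (cvgV (oner_neq0 R) tail_cvg).
by rewrite mulr1 invr1 mulr1 in lim; exact: lim.
Unshelve. all: by end_near.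
Qed.

End uniform_bound.

Theorem lemma3p4 (R : realType) (theta delta : R) (htheta : 0 < theta)
  (hdelta : 0 < delta) :
  exists eps : R -> R,
    (eps x @[x --> +oo] --> 0) /\
    forall (m v t : R), 0 < m -> delta <= v -> v <= 1 -> t <= delta^-1 ->
      cond_density_X v m theta t / normal_pdf (v * theta) (Num.sqrt v) t
        <= 1 + eps m.
Proof.
exists (fun m => ratio_bound theta delta m - 1); split.
  by rewrite -(subrr 1); apply: cvgB; [exact: ratio_bound_cvg | exact: cvg_cst].
move=> m v t m0 dv _ _; rewrite addrC subrK.
exact: cond_density_ratio_le_bound.
Qed.
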